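(* Let $D\subset\mathbb{R}^d$ be measurable, $k$ a measurable positive definite kernel with the integrals below finite, and $r:D\to[0,\infty)$. Let $\bar{\mathbf{x}}_1,\dots,\bar{\mathbf{x}}_n\in D$ be distinct with replicate counts $a_1,\dots,a_n\ge1$, $N=\sum_i a_i$; let $\mathbf{K}_{(N,n)}$ be the $n\times n$ matrix with entries $k(\bar{\mathbf{x}}_i,\bar{\mathbf{x}}_j)+\delta_{ij}r(\bar{\mathbf{x}}_i)/a_i$ (assumed invertible), $\mathbf{k}_n(\mathbf{x})=(k(\mathbf{x},\bar{\mathbf{x}}_i))_{i=1}^n$, $\mathbf{W}_n$ the matrix with entries $\int_D k(\bar{\mathbf{x}}_i,\mathbf{x})k(\bar{\mathbf{x}}_j,\mathbf{x})\,d\mathbf{x}$, $E=\int_D k(\mathbf{x},\mathbf{x})\,d\mathbf{x}$, and $I_N=\int_D\big(k(\mathbf{x},\mathbf{x})-\mathbf{k}_n(\mathbf{x})^\top\mathbf{K}_{(N,n)}^{-1}\mathbf{k}_n(\mathbf{x})\big)d\mathbf{x}$. For $k\in\{1,\dots,n\}$ with $r(\bar{\mathbf{x}}_k)>0$, let $I_{N+1}(\bar{\mathbf{x}}_k)$ denote the same integral computed for the design in which $a_k$ is replaced by $a_k+1$ (one additional replicate at $\bar{\mathbf{x}}_k$), and let $$\mathbf{B}_k=\frac{(\mathbf{K}_{(N,n)}^{-1})_{\cdot,k}(\mathbf{K}_{(N,n)}^{-1})_{k,\cdot}}{a_k(a_k+1)/r(\bar{\mathbf{x}}_k)-(\mathbf{K}_{(N,n)}^{-1})_{k,k}}$$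 (denominator assumed nonzero). Then $$I_{N+1}(\bar{\mathbf{x}}_k)=I_N-\mathrm{tr}(\mathbf{B}_k\mathbf{W}_n).$$
   Context: Setting: Gaussian process regression with zero-mean GP prior with kernel $k$ and independent Gaussian noise of variance $r(\mathbf{x})$, with $a_i$ replicates at unique site $\bar{\mathbf{x}}_i$; $I_N$ is the integrated mean-squared prediction error (integral over $D$ of the de-noised posterior variance). $(\cdot)_{\cdot,k}$, $(\cdot)_{k,\cdot}$ denote the $k$-th column and row, $\delta_{ij}$ the Kronecker delta. *)

From HB Require Import structures.
From mathcomp Require Import all_boot all_order all_algebra.
From mathcomp Require Import all_classical all_reals all_analysis.
Set Implicit Arguments. Unset Strict Implicit. Unset Printing Implicit Defensive.
Import Order.TTheory GRing.Theory Num.Theory.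
Local Open Scope classical_set_scope.
Local Open Scope ring_scope.

Definition posdef_kernel (T : Type) (R : realType) (k : T -> T -> R) : Prop :=
  (forall x y, k x y = k y x) /\
  (forall (m : nat) (x : 'I_m -> T) (c : 'I_m -> R),
      injective x -> (exists i, c i != 0) ->
      0 < \sum_(i < m) \sum_(j < m) c i * c j * k (x i) (x j)).

Definition Kmat (T : Type) (R : realType) (n : nat) (k : T -> T -> R)
  (r : T -> R) (xb : 'I_n -> T) (a : 'I_n -> nat) : 'M[R]_n :=
  \matrix_(i, j) (k (xb i) (xb j) + (i == j)%:R * (r (xb i) / (a i)%:R)).

Definition kvec (T : Type) (R : realType) (n : nat) (k : T -> T -> R)
  (xb : 'I_n -> T) (x : T) : 'cV[R]_n := \col_i k x (xb i).

Definition Wmat d (T : measurableType d) (R : realType)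
  (mu : {measure set T -> \bar R}) (D : set T) (n : nat)
  (k : T -> T -> R) (xb : 'I_n -> T) : 'M[R]_n :=
  \matrix_(i, j) Rintegral mu D (fun x => k (xb i) x * k (xb j) x).

Definition IMSPE d (T : measurableType d) (R : realType)
  (mu : {measure set T -> \bar R}) (D : set T) (n : nat)
  (k : T -> T -> R) (r : T -> R) (xb : 'I_n -> T) (a : 'I_n -> nat) : R :=
  Rintegral mu D (fun x =>
    k x x - ((kvec k xb x)^T *m invmx (Kmat k r xb a) *m kvec k xb x) 0 0).

Definition add_replicate (n : nat) (a : 'I_n -> nat) (l : 'I_n) : 'I_n -> nat :=
  fun i => if i == l then (a i).+1 else a i.

Definition Bmat (R : realType) (n : nat) (Kinv : 'M[R]_n) (a : 'I_n -> nat)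
  (rl : R) (l : 'I_n) : 'M[R]_n :=
  ((a l)%:R * ((a l).+1)%:R / rl - Kinv l l)^-1 *: (col l Kinv *m row l Kinv).

From HB Require Import structures.
From mathcomp Require Import all_boot all_order all_algebra.
From mathcomp Require Import all_classical all_reals all_analysis.
From mathcomp Require Import ring.
Set Implicit Arguments. Unset Strict Implicit. Unset Printing Implicit Defensive.
Import Order.TTheory GRing.Theory Num.Theory.
Local Open Scope classical_set_scope.
Local Open Scope ring_scope.

(* The quadratic form k_n(x)^T M k_n(x) is a fixed linear combination of the
   products k(xb_i, x) k(xb_j, x), so its integral is tr(M W_n); hence
   I_N = E - tr(K^-1 W_n).  One more replicate at xb_l only lowers the
   diagonal entry r/a_l of K to r/(a_l+1), i.e. subtracts the rank-one matrix
   (r/(a_l (a_l+1))) e_l e_l^T, and the Sherman-Morrison formula turns this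
   into K^-1 + B_l. *)

Lemma mulmx1_invmx n (F : fieldType) (A B : 'M[F]_n) : A *m B = 1%:M -> invmx A = B.
Proof.
by move=> AB; have [Au _] := mulmx1_unit AB; rewrite -[RHS](mulKmx Au) AB mulmx1.
Qed.

Section ShermanMorrison.
Variables (F : fieldType) (n : nat) (K : 'M[F]_n).
Hypothesis K_unit : K \in unitmx.

Lemma sherman_morrison (u : 'cV[F]_n) (v : 'rV[F]_n) :
  1 + (v *m invmx K *m u) 0 0 != 0 ->
  invmx (K + u *m v) =
    invmx K - (1 + (v *m invmx K *m u) 0 0)^-1 *: (invmx K *m u *m (v *m invmx K)).
Proof.
set g := 1 + _ => g0; apply: mulmx1_invmx.
have vKu : v *m invmx K *m u = (g - 1)%:M by rewrite [LHS]mx11_scalar /g addrC addKr.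
have uvKuvK : u *m v *m invmx K *m u *m v *m invmx K = (g - 1) *: (u *m v *m invmx K).
  by rewrite -!mulmxA (mulmxA v) (mulmxA (v *m _)) vKu mul_scalar_mx -!scalemxAr !mulmxA.
rewrite mulmxDl !mulmxBr mulmxV // -!scalemxAr !mulmxA (mulmxV K_unit) mul1mx.
rewrite uvKuvK scalerA.
have -> : g^-1 * (g - 1) = 1 - g^-1 by rewrite mulrBr mulVf // mulr1.
by rewrite scalerBl scale1r opprB [X in _ + X]addrC !subrK.
Qed.

Lemma invmx_sub_scale_delta (c : F) (l : 'I_n) :
  c != 0 -> c^-1 - invmx K l l != 0 ->
  invmx (K - c *: delta_mx l l) =
    invmx K + (c^-1 - invmx K l l)^-1 *: (col l (invmx K) *m row l (invmx K)).
Proof.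
move=> c0 den0.
have -> : K - c *: delta_mx l l = K + (- c *: delta_mx l 0 : 'cV_n) *m delta_mx 0 l.
  by rewrite -scalemxAl mul_delta_mx scaleNr.
have quad : ((delta_mx 0 l : 'rV_n) *m invmx K *m (- c *: delta_mx l 0 : 'cV_n)) 0 0
    = - c * invmx K l l.
  by rewrite -scalemxAr -rowE -colE !mxE.
have g_eq : 1 + - c * invmx K l l = c * (c^-1 - invmx K l l).
  by rewrite mulrBr mulfV // mulNr.
rewrite sherman_morrison quad g_eq ?mulf_neq0 //.
rewrite -scalemxAr -scalemxAl -rowE -colE scalerA invfM mulrAC mulrN mulVf //.
by rewrite mulN1r scaleNr opprK.
Qed.

End ShermanMorrison.

Section ReplicateUpdate.
Variables (T : Type) (R : realType) (k : T -> T -> R) (r : T -> R).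
Variables (n : nat) (xb : 'I_n -> T) (a : 'I_n -> nat) (l : 'I_n).
Hypothesis a_l_gt0 : (0 < a l)%N.

Lemma Kmat_add_replicate :
  Kmat k r xb (add_replicate a l) =
    Kmat k r xb a - (r (xb l) / ((a l)%:R * (a l).+1%:R)) *: delta_mx l l.
Proof.
have a0 : (a l)%:R != 0 :> R by rewrite pnatr_eq0 -lt0n.
have a10 : (a l).+1%:R != 0 :> R by rewrite pnatr_eq0.
apply/matrixP => i j; rewrite !mxE /add_replicate.
have [-> | _] := eqVneq i l; last by rewrite /= mulr0 subr0.
rewrite (eq_sym l j); have [-> | _] := eqVneq j l.
  by rewrite /=; field; rewrite nat1r a10 a0.
by rewrite /= !mul0r mulr0 subr0.
Qed.

Lemma invmx_Kmat_add_replicate :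
  Kmat k r xb a \in unitmx -> r (xb l) != 0 ->
  (a l)%:R * (a l).+1%:R / r (xb l) - invmx (Kmat k r xb a) l l != 0 ->
  invmx (Kmat k r xb (add_replicate a l)) =
    invmx (Kmat k r xb a) + Bmat (invmx (Kmat k r xb a)) a (r (xb l)) l.
Proof.
move=> K_unit r0 den0.
have a0 : (a l)%:R * (a l).+1%:R != 0 :> R by rewrite mulf_neq0 // pnatr_eq0 -?lt0n.
have c0 : r (xb l) / ((a l)%:R * (a l).+1%:R) != 0 by rewrite mulf_neq0 ?invr_eq0.
by rewrite Kmat_add_replicate invmx_sub_scale_delta ?invf_div.
Qed.

End ReplicateUpdate.

Section RintegralSum.
Context d (T : measurableType d) (R : realType) (mu : {measure set T -> \bar R}).
Variables (D : set T) (I : Type) (f : I -> T -> R).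
Hypothesis mD : measurable D.
Hypothesis f_int : forall i, mu.-integrable D (EFin \o f i).

Lemma integrable_Rsum {s : seq I} :
  mu.-integrable D (EFin \o (fun x => \sum_(i <- s) f i x)).
Proof.
have -> : EFin \o (fun x => \sum_(i <- s) f i x) = fun x => \sum_(i <- s) (f i x)%:E.
  by apply/funext => x; rewrite /= sumEFin.
by apply: (integrable_sum mD) => i _; exact: f_int.
Qed.

Lemma Rintegral_sum {s : seq I} :
  \int[mu]_(x in D) \sum_(i <- s) f i x = \sum_(i <- s) \int[mu]_(x in D) f i x.
Proof.
elim: s => [|i s IHs].
  by under eq_Rintegral do rewrite big_nil; rewrite Rintegral_cst // mul0r big_nil.
under eq_Rintegral do rewrite big_cons.
by rewrite RintegralD ?IHs ?big_cons //; exact: integrable_Rsum.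
Qed.

End RintegralSum.

Section KernelQuadraticForm.
Variables (R : realType) (d : measure_display) (T : measurableType d).
Variables (mu : {measure set T -> \bar R}) (D : set T) (k : T -> T -> R).
Variables (n : nat) (xb : 'I_n -> T).
Hypothesis mD : measurable D.
Hypothesis k_sym : forall x y, k x y = k y x.
Hypothesis kk_int : forall i j, mu.-integrable D (fun x => (k (xb i) x * k (xb j) x)%:E).

Lemma kvec_quad_form (M : 'M[R]_n) (x : T) :
  ((kvec k xb x)^T *m M *m kvec k xb x) 0 0 =
  \sum_(i < n) \sum_(j < n) M i j * (k (xb i) x * k (xb j) x).
Proof.
rewrite !mxE; under eq_bigr do rewrite !mxE big_distrl.
rewrite exchange_big; apply: eq_bigr => i _; apply: eq_bigr => j _.
by rewrite !mxE (k_sym x (xb i)) (k_sym x (xb j)) /= mulrCA mulrA.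
Qed.

Let entry_int (M : 'M[R]_n) i j :
  mu.-integrable D (EFin \o (fun x => M i j * (k (xb i) x * k (xb j) x))).
Proof. exact: (integrableZl mD (M i j) (kk_int i j)). Qed.

Lemma integrable_kvec_quad_form (M : 'M[R]_n) :
  mu.-integrable D (EFin \o (fun x => ((kvec k xb x)^T *m M *m kvec k xb x) 0 0)).
Proof.
rewrite (_ : (fun x => _) =
  fun x => \sum_(i < n) \sum_(j < n) M i j * (k (xb i) x * k (xb j) x)).
  exact: (integrable_Rsum mD (fun i => integrable_Rsum mD (entry_int M i))).
by apply/funext => x; exact: kvec_quad_form.
Qed.

Lemma Rintegral_kvec_quad_form (M : 'M[R]_n) :
  \int[mu]_(x in D) ((kvec k xb x)^T *m M *m kvec k xb x) 0 0 =
  \tr (M *m Wmat mu D k xb).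
Proof.
under eq_Rintegral do rewrite kvec_quad_form.
rewrite (Rintegral_sum mD (fun i => integrable_Rsum mD (entry_int M i))).
rewrite /mxtrace; apply: eq_bigr => i _.
rewrite (Rintegral_sum mD (entry_int M i)) !mxE.
apply: eq_bigr => j _; rewrite RintegralZl //; last exact: kk_int.
by rewrite mxE; congr (_ * _); apply: eq_Rintegral => x _; rewrite mulrC.
Qed.

Lemma IMSPE_trace (r : T -> R) (a : 'I_n -> nat) :
  mu.-integrable D (fun x => (k x x)%:E) ->
  IMSPE mu D k r xb a =
    \int[mu]_(x in D) k x x - \tr (invmx (Kmat k r xb a) *m Wmat mu D k xb).
Proof.
move=> kxx_int; rewrite /IMSPE RintegralB //; last exact: integrable_kvec_quad_form.
by rewrite Rintegral_kvec_quad_form.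
Qed.

End KernelQuadraticForm.

Theorem mainTheorem3 (R : realType) (d : measure_display) (T : measurableType d)
  (mu : {measure set T -> \bar R}) (D : set T) (k : T -> T -> R) (r : T -> R)
  (n : nat) (xb : 'I_n -> T) (a : 'I_n -> nat) (l : 'I_n) :
  measurable D ->
  posdef_kernel k ->
  measurable_fun setT (fun p : T * T => k p.1 p.2) ->
  mu.-integrable D (fun x => (k x x)%:E) ->
  (forall i j, mu.-integrable D (fun x => (k (xb i) x * k (xb j) x)%:E)) ->
  (forall x, D x -> 0 <= r x) ->
  (forall i, D (xb i)) ->
  injective xb ->
  (forall i, (0 < a i)%N) ->
  Kmat k r xb a \in unitmx ->
  0 < r (xb l) ->
  (a l)%:R * ((a l).+1)%:R / r (xb l) - (invmx (Kmat k r xb a)) l l != 0 ->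
  IMSPE mu D k r xb (add_replicate a l) =
    IMSPE mu D k r xb a
    - \tr (Bmat (invmx (Kmat k r xb a)) a (r (xb l)) l *m Wmat mu D k xb).
Proof.
move=> mD [k_sym _] _ kxx_int kk_int _ _ _ a_gt0 K_unit r_gt0 den0.
rewrite !(IMSPE_trace mD k_sym kk_int r _ kxx_int).
rewrite (invmx_Kmat_add_replicate (a_gt0 l) K_unit (lt0r_neq0 r_gt0) den0).
by rewrite mulmxDl mxtraceD opprD addrA.
Qed.
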